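(* Let $a<b$, $c<d$ and $C\in\mathbb{R}\setminus\{0\}$. Let $(p_n)_{n\ge0}$, $(q_n)_{n\ge0}$ be real sequences with $p_0=q_0$ such that $\sigma(s)=\sum_{n\ge0}p_n(s-a)^n$ and $\tau(t)=\sum_{n\ge0}q_n(t-c)^n$ converge uniformly on $[a,b]$ and $[c,d]$ respectively. Let $k$ be the solution of the Goursat problem $\partial^2k/\partial s\partial t=Ck$ on $[a,b]\times[c,d]$ with $k(s,c)=\sigma(s)$, $k(a,t)=\tau(t)$. Then for all $(s,t)\in[a,b]\times[c,d]$, $$k(s,t)=\sum_{n=1}^\infty\sum_{m=0}^\infty p_n\frac{[C(t-c)]^m(s-a)^{n+m}}{m!}\frac{n!}{(n+m)!}+\sum_{n=0}^\infty\sum_{m=0}^\infty q_n\frac{[C(s-a)]^m(t-c)^{n+m}}{m!}\frac{n!}{(n+m)!},$$ or equivalently $$k(s,t)=\sum_{n=0}^\infty\sum_{m=0}^\infty p_n\frac{[C(t-c)]^m(s-a)^{n+m}}{m!}\frac{n!}{(n+m)!}+\sum_{n=1}^\infty\sum_{m=0}^\infty q_n\frac{[C(s-a)]^m(t-c)^{n+m}}{m!}\frac{n!}{(n+m)!}.$$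
   Context: The solution of the Goursat problem is the continuous function $k$ on $[a,b]\times[c,d]$ with $k(s,t)=\sigma(s)+\tau(t)-\sigma(a)+C\int_a^s\int_c^t k(r,w)\,dw\,dr$ (equivalently, the classical solution given by the Riemann-function representation with the zero-order modified Bessel function $I_0$). *)

From Stdlib Require Import Reals Arith.
From Coquelicot Require Import Coquelicot.
Open Scope R_scope.

Definition pser_partial (p : nat -> R) (x0 : R) (N : nat) (x : R) : R :=
  sum_f_R0 (fun n => p n * (x - x0) ^ n) N.

Definition unif_cv_on (u : nat -> R -> R) (f : R -> R) (lo hi : R) : Prop :=
  forall eps : R, 0 < eps -> exists N : nat, forall (n : nat) (x : R),
    (N <= n)%nat -> lo <= x <= hi -> Rabs (u n x - f x) < eps.

Definition cont_on_rect (k : R -> R -> R) (a b c d : R) : Prop :=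
  forall s t, a <= s <= b -> c <= t <= d ->
  forall eps : R, 0 < eps -> exists delta : R, 0 < delta /\
    forall s' t', a <= s' <= b -> c <= t' <= d ->
      Rabs (s' - s) < delta -> Rabs (t' - t) < delta ->
      Rabs (k s' t' - k s t) < eps.

Definition gterm (p : nat -> R) (C x y : R) (n m : nat) : R :=
  p n * (C * y) ^ m * x ^ (n + m) / INR (fact m) * INR (fact n) / INR (fact (n + m)).

(* The Goursat problem is the fixed-point equation k = g + T k for the Picard operator
   T h (s, t) = C * int_a^s int_c^t h, with g (s, t) = sigma s - sigma a + tau t.  If |h| <= B
   on the rectangle then |T^m h (s, t)| <= B |C|^m (s-a)^m (t-c)^m / m!^2; these weights are
   summable, so k = sum_m T^m g.  On the other hand T maps the (n, m) term of the formula, as a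
   function of (s, t), to the (n, m+1) term, and the (n, 0) terms are the monomials of sigma and
   tau.  Hence T^m applied to a partial sum of sigma or tau is a finite piece of the m-th column of
   the double series; since the partial sums converge uniformly, the same weights dominate the
   error, and sum_m T^m g rearranges into the double series. *)

From Stdlib Require Import Reals Arith Lra Lia.
From Coquelicot Require Import Coquelicot.
Open Scope R_scope.

Lemma ex_series_exp_pow (z : R) : ex_series (fun m => z ^ m / INR (fact m)).
Proof.
  eexists. eapply is_series_ext; [|apply (is_exp_Reals z)].
  intros n; simpl; rewrite pow_n_pow; unfold scal; simpl; unfold mult; simpl.
  unfold Rdiv; ring.
Qed.

Lemma Rabs_Series_le (u w : nat -> R) :
  (forall m, Rabs (u m) <= w m) -> ex_series w -> Rabs (Series u) <= Series w.
Proof.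
  intros Huw Hw.
  assert (Habs : ex_series (fun m => Rabs (u m))).
  { apply (@ex_series_le R_AbsRing R_CompleteNormedModule _ w); auto.
    intros m; rewrite Rabs_Rabsolu; auto. }
  eapply Rle_trans; [apply Series_Rabs; auto|].
  apply Series_le; auto. intros m; split; [apply Rabs_pos|auto].
Qed.

Lemma Series_sum_f_R0 (A : nat -> nat -> R) (N : nat) :
  (forall n, ex_series (A n)) ->
  ex_series (fun m => sum_f_R0 (fun n => A n m) N) /\
  Series (fun m => sum_f_R0 (fun n => A n m) N) = sum_f_R0 (fun n => Series (A n)) N.
Proof.
  intros HA; induction N as [|N [IHex IHeq]]; simpl; auto.
  split; [apply (ex_series_plus (V := R_NormedModule))|rewrite Series_plus, IHeq]; auto.
Qed.

Lemma is_series_Series_interchange (A : nat -> nat -> R) (G w : nat -> R) :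
  (forall n, ex_series (A n)) -> ex_series w ->
  (forall eps, 0 < eps -> exists N0, forall N m, (N0 <= N)%nat ->
     Rabs (G m - sum_f_R0 (fun n => A n m) N) <= eps * w m) ->
  ex_series G /\ is_series (fun n => Series (A n)) (Series G).
Proof.
  intros HA Hw Happrox.
  destruct (Happrox 1 Rlt_0_1) as [N1 HN1].
  assert (Hw0 : forall m, 0 <= w m).
  { intros m; specialize (HN1 N1 m (le_n _)).
    pose proof (Rabs_pos (G m - sum_f_R0 (fun n => A n m) N1)); lra. }
  destruct (Series_sum_f_R0 A N1 HA) as [HS1 _].
  assert (HG : ex_series G).
  { assert (Hd : ex_series (fun m => G m - sum_f_R0 (fun n => A n m) N1)).
    { apply (@ex_series_le R_AbsRing R_CompleteNormedModule _ w); auto.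
      intros m; rewrite <- Rmult_1_l; apply HN1; auto. }
    eapply ex_series_ext; [|apply (ex_series_plus _ _ Hd HS1)].
    intros m; unfold plus; simpl; ring. }
  split; auto.
  set (W := Series w).
  assert (HW : 0 <= W).
  { apply Rle_trans with (Series (fun m => 0 * w m)); [rewrite Series_scal_l; lra|].
    apply Series_le; auto. intros m; specialize (Hw0 m); lra. }
  apply is_series_Reals; intros eps Heps.
  destruct (Happrox (eps / (W + 1))) as [N0 HN0]; [apply Rdiv_lt_0_compat; lra|].
  exists N0; intros N HN; unfold R_dist.
  destruct (Series_sum_f_R0 A N HA) as [HSN <-].
  rewrite <- Series_minus by auto.
  eapply Rle_lt_trans.
  { apply (Rabs_Series_le _ (fun m => eps / (W + 1) * w m)).
    - intros m; rewrite Rabs_minus_sym; apply HN0; lia.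
    - apply (ex_series_scal_l (V := R_NormedModule)); auto. }
  rewrite Series_scal_l; fold W.
  apply Rlt_le_trans with (eps / (W + 1) * (W + 1)); [|right; field; lra].
  apply Rmult_lt_compat_l; [apply Rdiv_lt_0_compat|]; lra.
Qed.

Lemma is_series_move_head (u v : nat -> R) (SP SQ : R) :
  u 0%nat = v 0%nat -> is_series (fun n => u (S n)) SP -> is_series v SQ ->
  exists SP' SQ', is_series u SP' /\ is_series (fun n => v (S n)) SQ' /\ SP + SQ = SP' + SQ'.
Proof.
  intros Huv Hu Hv; exists (SP + u 0%nat), (SQ - v 0%nat); split; [|split].
  - apply is_series_decr_1; change (is_series (fun n => u (S n)) (SP + u 0%nat + - u 0%nat)).
    replace (SP + u 0%nat + - u 0%nat) with SP by ring; auto.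
  - apply is_series_incr_1; change (is_series v (SQ - v 0%nat + v 0%nat)).
    replace (SQ - v 0%nat + v 0%nat) with SQ by ring; auto.
  - rewrite Huv; ring.
Qed.

Lemma is_RInt_pow_shift (x0 t : R) (j : nat) :
  is_RInt (fun w => (w - x0) ^ j) x0 t ((t - x0) ^ S j / INR (S j)).
Proof.
  assert (HS : INR (S j) <> 0) by (apply not_0_INR; lia).
  set (F := fun w => (w - x0) ^ S j / INR (S j)).
  replace ((t - x0) ^ S j / INR (S j)) with (minus (F t) (F x0)).
  2:{ unfold F, minus, plus, opp; simpl; rewrite Rminus_diag; field; auto. }
  apply (@is_RInt_derive R_CompleteNormedModule).
  - intros x _; unfold F; auto_derive; auto.
    change (match j with 0%nat => 1 | S _ => INR j + 1 end) with (INR (S j)).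
    unfold Rminus; field; auto.
  - intros x _; apply continuity_pt_filterlim; reg.
Qed.

Lemma RInt_scal_pow_shift (K x0 t : R) (j : nat) :
  RInt (fun w => K * (w - x0) ^ j) x0 t = K * ((t - x0) ^ S j / INR (S j)).
Proof. apply is_RInt_unique, (@is_RInt_scal R_NormedModule _ _ _ K), is_RInt_pow_shift. Qed.

Lemma RInt_Chasles_sub (f : R -> R) (x y z : R) :
  ex_RInt f x y -> ex_RInt f y z -> RInt f x z - RInt f x y = RInt f y z.
Proof. intros Hxy Hyz; rewrite <- (RInt_Chasles f x y z Hxy Hyz); unfold plus; simpl; ring. Qed.

Lemma Rabs_RInt_le_is_RInt (f g : R -> R) (lo hi G : R) :
  lo <= hi -> ex_RInt f lo hi -> is_RInt g lo hi G ->
  (forall x, lo <= x <= hi -> Rabs (f x) <= g x) -> Rabs (RInt f lo hi) <= G.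
Proof.
  intros Hle Hf Hg Hfg.
  assert (Hng : is_RInt (fun x => - g x) lo hi (- G)) by apply (is_RInt_opp _ _ _ _ Hg).
  apply Rabs_le; split.
  - rewrite <- (is_RInt_unique _ _ _ _ Hng); apply RInt_le; auto; [exists (- G); auto|].
    intros x Hx; specialize (Hfg x ltac:(lra)); apply Rabs_le_between in Hfg; lra.
  - rewrite <- (is_RInt_unique _ _ _ _ Hg); apply RInt_le; auto; [exists G; auto|].
    intros x Hx; specialize (Hfg x ltac:(lra)); apply Rabs_le_between in Hfg; lra.
Qed.

Lemma Rmin_Rmax_interval (lo hi x y z : R) :
  lo <= x <= hi -> lo <= y <= hi -> Rmin x y <= z <= Rmax x y -> lo <= z <= hi.
Proof.
  intros Hx Hy Hz; split; [apply Rle_trans with (Rmin x y); [apply Rmin_glb|]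
                          |apply Rle_trans with (Rmax x y); [|apply Rmax_lub]]; lra.
Qed.

Lemma Rabs_RInt_le_const (f : R -> R) (x y M : R) :
  ex_RInt f x y -> (forall z, Rmin x y <= z <= Rmax x y -> Rabs (f z) <= M) ->
  Rabs (RInt f x y) <= Rabs (y - x) * M.
Proof.
  intros Hf HM; destruct (Rle_dec x y) as [Hxy|Hxy].
  - rewrite (Rabs_right (y - x)) by lra; apply abs_RInt_le_const; auto.
    intros z Hz; apply HM; rewrite Rmin_left, Rmax_right; lra.
  - rewrite <- (opp_RInt_swap f) by (apply ex_RInt_swap; auto).
    change (Rabs (- RInt f y x) <= Rabs (y - x) * M).
    rewrite Rabs_Ropp, (Rabs_left (y - x)), Ropp_minus_distr by lra.
    apply abs_RInt_le_const; [lra|apply ex_RInt_swap; auto|].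
    intros z Hz; apply HM; rewrite Rmin_right, Rmax_left; lra.
Qed.

Definition unif_cont_1d (lo hi : R) (g : R -> R) : Prop :=
  forall eps, 0 < eps -> exists delta, 0 < delta /\
    forall x u, lo <= x <= hi -> lo <= u <= hi -> Rabs (u - x) < delta -> Rabs (g u - g x) < eps.

(* [fun x => g (clamp lo hi x)] agrees with [g] on [lo, hi] and is continuous on all of [R],
   which is the form in which Coquelicot's integrability criterion applies. *)
Definition clamp (lo hi x : R) : R := Rmax lo (Rmin hi x).

Lemma clamp_in (lo hi x : R) : lo <= hi -> lo <= clamp lo hi x <= hi.
Proof. intros H; unfold clamp; split; [apply Rmax_l|apply Rmax_lub; [auto|apply Rmin_l]]. Qed.

Lemma clamp_id (lo hi x : R) : lo <= x <= hi -> clamp lo hi x = x.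
Proof. intros H; unfold clamp; rewrite Rmin_right, Rmax_right; lra. Qed.

Lemma Rabs_clamp_sub_le (lo hi x u : R) : Rabs (clamp lo hi u - clamp lo hi x) <= Rabs (u - x).
Proof.
  unfold clamp, Rmax, Rmin; repeat destruct Rle_dec; apply Rabs_le;
  pose proof (Rabs_pos (u - x)); pose proof (Rle_abs (u - x));
  pose proof (Rle_abs (- (u - x))); rewrite Rabs_Ropp in *; lra.
Qed.

Lemma ex_RInt_unif_cont_1d (lo hi x y : R) (g : R -> R) :
  unif_cont_1d lo hi g -> lo <= x <= hi -> lo <= y <= hi -> ex_RInt g x y.
Proof.
  intros Hg Hx Hy.
  apply (@ex_RInt_ext R_NormedModule (fun z => g (clamp lo hi z))).
  { intros z Hz; rewrite clamp_id; auto; apply (Rmin_Rmax_interval lo hi x y); auto; lra. }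
  apply (@ex_RInt_continuous R_CompleteNormedModule); intros z _.
  apply continuity_pt_filterlim; intros eps Heps.
  destruct (Hg eps Heps) as [delta [Hdelta Hd]].
  exists delta; split; auto; intros u [_ Hu]; unfold R_dist in *.
  apply Hd; try apply clamp_in; try lra.
  eapply Rle_lt_trans; [apply Rabs_clamp_sub_le|auto].
Qed.

Lemma unif_cont_1d_of_continuity (lo hi : R) (g : R -> R) :
  (forall x, lo <= x <= hi -> continuity_pt g x) -> unif_cont_1d lo hi g.
Proof.
  intros Hg eps Heps; destruct (Heine_cor2 Hg (mkposreal eps Heps)) as [delta Hd].
  exists delta; split; [apply cond_pos|]; intros x u Hx Hu Hux.
  apply Hd; auto; rewrite Rabs_minus_sym; auto.
Qed.

Lemma unif_cont_1d_unif_limit (lo hi : R) (u : nat -> R -> R) (f : R -> R) :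
  (forall n, unif_cont_1d lo hi (u n)) -> unif_cv_on u f lo hi -> unif_cont_1d lo hi f.
Proof.
  intros Hu Hcv eps Heps.
  destruct (Hcv (eps / 3)) as [N HN]; [lra|].
  destruct (Hu N (eps / 3)) as [delta [Hdelta Hd]]; [lra|].
  exists delta; split; auto; intros x v Hx Hv Hxv.
  pose proof (HN N x (le_n _) Hx); pose proof (HN N v (le_n _) Hv).
  pose proof (Hd x v Hx Hv Hxv).
  replace (f v - f x) with (- (u N v - f v) + (u N v - u N x) + (u N x - f x)) by ring.
  eapply Rle_lt_trans; [apply Rabs_triang|].
  eapply Rle_lt_trans; [apply Rplus_le_compat_r, Rabs_triang|].
  rewrite Rabs_Ropp; lra.
Qed.

Lemma unit_interval_oscillation_bound (eta : R) : 0 < eta ->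
  exists N : nat, forall phi : R -> R,
    (forall u v, 0 <= u <= 1 -> 0 <= v <= 1 -> Rabs (v - u) < eta ->
       Rabs (phi v - phi u) < 1) ->
    Rabs (phi 1 - phi 0) <= INR N.
Proof.
  intros Heta; destruct (archimed_cor1 eta Heta) as [N [HN HN0]].
  exists N; intros phi Hphi.
  set (h := / INR N) in *.
  assert (Hh : 0 < h) by (apply Rinv_0_lt_compat, lt_0_INR; auto).
  assert (HNh : INR N * h = 1) by (apply Rinv_r, not_0_INR; lia).
  assert (Hchain : forall i, (i <= N)%nat -> Rabs (phi (INR i * h) - phi 0) <= INR i).
  { induction i as [|i IHi]; intros Hi.
    - rewrite Rmult_0_l, Rminus_diag, Rabs_R0; simpl; lra.
    - specialize (IHi ltac:(lia)).
      assert (HiN : INR (S i) <= INR N) by (apply le_INR; auto).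
      rewrite S_INR in *; pose proof (pos_INR i).
      assert (Hjump : Rabs (phi ((INR i + 1) * h) - phi (INR i * h)) < 1).
      { apply Hphi; try split; try nra.
        replace ((INR i + 1) * h - INR i * h) with h by ring; rewrite (Rabs_right h); lra. }
      pose proof (Rabs_triang (phi ((INR i + 1) * h) - phi (INR i * h)) (phi (INR i * h) - phi 0)).
      replace (phi ((INR i + 1) * h) - phi (INR i * h) + (phi (INR i * h) - phi 0))
        with (phi ((INR i + 1) * h) - phi 0) in * by ring.
      lra. }
  rewrite <- HNh; apply Hchain; auto.
Qed.

Lemma pser_partial_center (p : nat -> R) (x0 : R) (N : nat) : pser_partial p x0 N x0 = p 0%nat.
Proof. unfold pser_partial; induction N as [|N IHN]; simpl; [|rewrite IHN, Rminus_diag]; ring. Qed.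

Lemma unif_cv_on_pser_center (p : nat -> R) (f : R -> R) (x0 hi : R) :
  x0 <= hi -> unif_cv_on (pser_partial p x0) f x0 hi -> f x0 = p 0%nat.
Proof.
  intros Hx0 Hcv; destruct (Req_dec (f x0) (p 0%nat)) as [E|E]; auto; exfalso.
  destruct (Hcv (Rabs (p 0%nat - f x0))) as [N HN].
  { apply Rabs_pos_lt; intros E'; apply E; lra. }
  specialize (HN N x0 (le_n _) ltac:(lra)); rewrite pser_partial_center in HN; lra.
Qed.

Lemma continuity_pt_pser_partial (p : nat -> R) (x0 : R) (N : nat) (x : R) :
  continuity_pt (pser_partial p x0 N) x.
Proof.
  apply continuity_pt_filterlim, (@ex_derive_continuous R_AbsRing R_NormedModule).
  unfold pser_partial; induction N as [|N IHN]; simpl; [auto_derive; auto|].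
  apply (ex_derive_plus (V := R_NormedModule)); auto; auto_derive; auto.
Qed.

Lemma unif_cont_1d_pser_limit (p : nat -> R) (x0 lo hi : R) (f : R -> R) :
  unif_cv_on (pser_partial p x0) f lo hi -> unif_cont_1d lo hi f.
Proof.
  intros Hcv; apply (unif_cont_1d_unif_limit lo hi (pser_partial p x0)); auto.
  intros N; apply unif_cont_1d_of_continuity; intros; apply continuity_pt_pser_partial.
Qed.

Definition gcoef (p : nat -> R) (C : R) (n m : nat) : R :=
  p n * C ^ m * INR (fact n) / (INR (fact m) * INR (fact (n + m))).

Lemma gterm_monomial (p : nat -> R) (C x y : R) (n m : nat) :
  gterm p C x y n m = gcoef p C n m * x ^ (n + m) * y ^ m.
Proof. unfold gterm, gcoef; rewrite Rpow_mult_distr; field; split; apply INR_fact_neq_0. Qed.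

Lemma gterm_succ (p : nat -> R) (C x y : R) (n m : nat) :
  C * (gcoef p C n m * (x ^ S (n + m) / INR (S (n + m))) * (y ^ S m / INR (S m))) =
  gterm p C x y n (S m).
Proof.
  unfold gterm, gcoef.
  rewrite Nat.add_succ_r, !fact_simpl, !mult_INR, Rpow_mult_distr, <- !tech_pow_Rmult.
  field; repeat split; try apply INR_fact_neq_0; apply not_0_INR; lia.
Qed.

Lemma gterm_m0 (p : nat -> R) (C x y : R) (n : nat) : gterm p C x y n 0 = p n * x ^ n.
Proof. unfold gterm; rewrite Nat.add_0_r; simpl; field; apply INR_fact_neq_0. Qed.

Lemma sum_gterm_m0 (p : nat -> R) (C x y : R) (N : nat) :
  sum_f_R0 (fun n => gterm p C x y n 0) N = sum_f_R0 (fun n => p n * x ^ n) N.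
Proof. apply sum_eq; intros; apply gterm_m0. Qed.

Lemma sum_gterm_m0_succ (p : nat -> R) (C x y : R) (N : nat) :
  sum_f_R0 (fun n => gterm p C x y (S n) 0) N =
  sum_f_R0 (fun n => p n * x ^ n) (S N) - p 0%nat.
Proof.
  rewrite (decomp_sum (fun n => p n * x ^ n) (S N)) by lia; simpl pred.
  rewrite (sum_eq _ (fun i => p (S i) * x ^ S i)) by (intros; apply gterm_m0).
  simpl; ring.
Qed.

Lemma gterm_n0_swap (p q : nat -> R) (C x y : R) (m : nat) :
  p 0%nat = q 0%nat -> gterm p C x y 0 m = gterm q C y x 0 m.
Proof. intros Hpq; unfold gterm; simpl; rewrite Hpq, !Rpow_mult_distr; unfold Rdiv; ring. Qed.

(* Since n! <= (n+m)!, the n-th row is dominated by an exponential series. *)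
Lemma ex_series_gterm (p : nat -> R) (C x y : R) (n : nat) :
  0 <= x -> 0 <= y -> ex_series (gterm p C x y n).
Proof.
  intros Hx Hy.
  apply (@ex_series_le R_AbsRing R_CompleteNormedModule _
           (fun m => Rabs (p n) * x ^ n * ((Rabs C * y * x) ^ m / INR (fact m))));
    [|apply (ex_series_scal_l (V := R_NormedModule)), ex_series_exp_pow].
  intros m; change (norm (gterm p C x y n m)) with (Rabs (gterm p C x y n m)).
  pose proof (INR_fact_lt_0 n); pose proof (INR_fact_lt_0 m).
  pose proof (INR_fact_lt_0 (n + m)) as Hfact_nm.
  assert (Hratio : 0 <= INR (fact n) / INR (fact (n + m)) <= 1).
  { split; [apply Rdiv_le_0_compat; lra|].
    apply (proj1 (Rdiv_le_1 _ _ Hfact_nm)), le_INR, fact_le; lia. }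
  replace (gterm p C x y n m) with
    (p n * x ^ n * ((C * y * x) ^ m / INR (fact m)) * (INR (fact n) / INR (fact (n + m)))).
  2:{ unfold gterm; rewrite pow_add, !Rpow_mult_distr; field; lra. }
  rewrite Rabs_mult, (Rabs_right (_ / _)) by lra.
  replace (Rabs (p n * x ^ n * ((C * y * x) ^ m / INR (fact m))))
    with (Rabs (p n) * x ^ n * ((Rabs C * y * x) ^ m / INR (fact m))).
  2:{ rewrite !Rabs_mult, Rabs_div, <- !RPow_abs, !Rabs_mult, (Rabs_right x), (Rabs_right y),
        (Rabs_right (INR _)) by lra; auto. }
  assert (0 <= Rabs (p n) * x ^ n * ((Rabs C * y * x) ^ m / INR (fact m))).
  { apply Rmult_le_pos; [apply Rmult_le_pos; [apply Rabs_pos|apply pow_le; auto]|].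
    apply Rdiv_le_0_compat; [|lra].
    apply pow_le; repeat apply Rmult_le_pos; auto; apply Rabs_pos. }
  nra.
Qed.

Lemma continuity_2d_pt_monomial (A x0 y0 : R) (i j : nat) (x y : R) :
  continuity_2d_pt (fun r w => A * (r - x0) ^ i * (w - y0) ^ j) x y.
Proof.
  apply continuity_2d_pt_mult; [apply continuity_2d_pt_mult; [apply continuity_2d_pt_const|]|].
  - apply (continuity_1d_2d_pt_comp (fun z => (z - x0) ^ i) (fun u _ => u));
      [reg|apply continuity_2d_pt_id1].
  - apply (continuity_1d_2d_pt_comp (fun z => (z - y0) ^ j) (fun _ v => v));
      [reg|apply continuity_2d_pt_id2].
Qed.

(** * Uniform continuity on a rectangle *)

Section Rectangle.

Variables a b c d : R.
Hypotheses (Hab : a <= b) (Hcd : c <= d).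

Definition unif_cont_2d (h : R -> R -> R) : Prop :=
  forall eps, 0 < eps -> exists delta, 0 < delta /\
    forall x y u v, a <= x <= b -> c <= y <= d -> a <= u <= b -> c <= v <= d ->
      Rabs (u - x) < delta -> Rabs (v - y) < delta -> Rabs (h u v - h x y) < eps.

Lemma unif_cont_2d_slice (h : R -> R -> R) (r : R) :
  unif_cont_2d h -> a <= r <= b -> unif_cont_1d c d (h r).
Proof.
  intros Hh Hr eps Heps; destruct (Hh eps Heps) as [delta [Hdelta Hd]].
  exists delta; split; auto; intros y v Hy Hv Hvy.
  apply Hd; auto; rewrite Rminus_diag, Rabs_R0; auto.
Qed.

Lemma ex_RInt_slice (h : R -> R -> R) (r y1 y2 : R) :
  unif_cont_2d h -> a <= r <= b -> c <= y1 <= d -> c <= y2 <= d -> ex_RInt (h r) y1 y2.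
Proof. intros; eapply ex_RInt_unif_cont_1d; eauto; apply unif_cont_2d_slice; auto. Qed.

Lemma unif_cont_2d_ext (u v : R -> R -> R) :
  (forall r w, a <= r <= b -> c <= w <= d -> u r w = v r w) ->
  unif_cont_2d u -> unif_cont_2d v.
Proof.
  intros Huv Hu eps Heps; destruct (Hu eps Heps) as [delta [Hdelta Hd]].
  exists delta; split; auto; intros; rewrite <- !Huv; auto.
Qed.

Lemma unif_cont_2d_fst (g : R -> R) : unif_cont_1d a b g -> unif_cont_2d (fun r _ => g r).
Proof.
  intros Hg eps Heps; destruct (Hg eps Heps) as [delta [Hdelta Hd]].
  exists delta; split; auto.
Qed.

Lemma unif_cont_2d_snd (g : R -> R) : unif_cont_1d c d g -> unif_cont_2d (fun _ w => g w).
Proof.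
  intros Hg eps Heps; destruct (Hg eps Heps) as [delta [Hdelta Hd]].
  exists delta; split; auto.
Qed.

Lemma unif_cont_2d_const (K : R) : unif_cont_2d (fun _ _ => K).
Proof. intros eps Heps; exists 1; split; [lra|]; intros; rewrite Rminus_diag, Rabs_R0; auto. Qed.

Lemma unif_cont_2d_plus (u v : R -> R -> R) :
  unif_cont_2d u -> unif_cont_2d v -> unif_cont_2d (fun r w => u r w + v r w).
Proof.
  intros Hu Hv eps Heps.
  destruct (Hu (eps / 2)) as [d1 [Hd1 H1]]; [lra|].
  destruct (Hv (eps / 2)) as [d2 [Hd2 H2]]; [lra|].
  exists (Rmin d1 d2); split; [apply Rmin_glb_lt; auto|].
  intros x y x' y' Hx Hy Hx' Hy' Hxx Hyy.
  pose proof (Rmin_l d1 d2); pose proof (Rmin_r d1 d2).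
  specialize (H1 x y x' y' Hx Hy Hx' Hy' ltac:(lra) ltac:(lra)).
  specialize (H2 x y x' y' Hx Hy Hx' Hy' ltac:(lra) ltac:(lra)).
  replace (u x' y' + v x' y' - (u x y + v x y))
    with ((u x' y' - u x y) + (v x' y' - v x y)) by ring.
  eapply Rle_lt_trans; [apply Rabs_triang|lra].
Qed.

Lemma unif_cont_2d_opp (u : R -> R -> R) : unif_cont_2d u -> unif_cont_2d (fun r w => - u r w).
Proof.
  intros Hu eps Heps; destruct (Hu eps Heps) as [delta [Hdelta Hd]].
  exists delta; split; auto; intros x y x' y' Hx Hy Hx' Hy' Hxx Hyy.
  rewrite <- Rabs_Ropp; replace (- (- u x' y' - - u x y)) with (u x' y' - u x y) by ring; auto.
Qed.

Lemma unif_cont_2d_minus (u v : R -> R -> R) :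
  unif_cont_2d u -> unif_cont_2d v -> unif_cont_2d (fun r w => u r w - v r w).
Proof.
  intros; apply (unif_cont_2d_plus u (fun r w => - v r w)); [|apply unif_cont_2d_opp]; auto.
Qed.

Lemma unif_cont_2d_sum (f : nat -> R -> R -> R) (N : nat) :
  (forall n, unif_cont_2d (f n)) -> unif_cont_2d (fun r w => sum_f_R0 (fun n => f n r w) N).
Proof.
  intros Hf; induction N as [|N IHN]; simpl; [apply Hf|].
  apply (unif_cont_2d_plus (fun r w => sum_f_R0 (fun n => f n r w) N)); auto.
Qed.

Lemma unif_cont_2d_of_continuity_2d (h : R -> R -> R) :
  (forall x y, a <= x <= b -> c <= y <= d -> continuity_2d_pt h x y) -> unif_cont_2d h.
Proof.
  intros Hh eps Heps.
  destruct (uniform_continuity_2d h a b c d Hh (mkposreal eps Heps)) as [delta Hd].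
  exists delta; split; [apply cond_pos|]; intros; apply Hd; auto.
Qed.

Lemma unif_cont_2d_of_cont_on_rect (k : R -> R -> R) :
  cont_on_rect k a b c d -> unif_cont_2d k.
Proof.
  intros Hk.
  set (kc := fun u v => k (clamp a b u) (clamp c d v)).
  apply (unif_cont_2d_ext kc).
  { intros r w Hr Hw; unfold kc; rewrite !clamp_id; auto. }
  apply unif_cont_2d_of_continuity_2d; intros x y Hx Hy eps.
  destruct (Hk x y Hx Hy eps (cond_pos eps)) as [delta [Hdelta Hd]].
  exists (mkposreal delta Hdelta); intros u v Hu Hv; simpl in *; unfold kc.
  rewrite (clamp_id a b x), (clamp_id c d y) by auto.
  apply Hd; try apply clamp_in; auto.
  - rewrite <- (clamp_id a b x) by auto; eapply Rle_lt_trans; [apply Rabs_clamp_sub_le|auto].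
  - rewrite <- (clamp_id c d y) by auto; eapply Rle_lt_trans; [apply Rabs_clamp_sub_le|auto].
Qed.

Lemma unif_cont_2d_pser_fst (p : nat -> R) (sigma : R -> R) :
  unif_cv_on (pser_partial p a) sigma a b -> unif_cont_2d (fun r _ => sigma r - p 0%nat).
Proof.
  intros Hcv; apply (unif_cont_2d_minus (fun r _ => sigma r)); [|apply unif_cont_2d_const].
  apply unif_cont_2d_fst; eapply unif_cont_1d_pser_limit; eauto.
Qed.

Lemma unif_cont_2d_pser_snd (q : nat -> R) (tau : R -> R) :
  unif_cv_on (pser_partial q c) tau c d -> unif_cont_2d (fun _ w => tau w).
Proof. intros Hcv; apply unif_cont_2d_snd; eapply unif_cont_1d_pser_limit; eauto. Qed.

(* Chain from (a, c) to (x, y) along the segment: each short step changes h by less than 1. *)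
Lemma unif_cont_2d_bounded (h : R -> R -> R) : unif_cont_2d h ->
  exists M, 0 <= M /\ forall r w, a <= r <= b -> c <= w <= d -> Rabs (h r w) <= M.
Proof.
  intros Hh; destruct (Hh 1 Rlt_0_1) as [delta [Hdelta Hd]].
  set (L := b - a + (d - c) + 1).
  destruct (unit_interval_oscillation_bound (delta / L)) as [N HN].
  { apply Rdiv_lt_0_compat; unfold L; lra. }
  exists (Rabs (h a c) + INR N).
  split; [pose proof (Rabs_pos (h a c)); pose proof (pos_INR N); lra|].
  intros x y Hx Hy.
  set (phi := fun l => h (a + l * (x - a)) (c + l * (y - c))).
  assert (Hphi : Rabs (phi 1 - phi 0) <= INR N).
  { apply HN; intros l l' Hl Hl' Hll; unfold phi.
    assert (HL : Rabs (l' - l) * L < delta).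
    { apply (Rmult_lt_compat_r L) in Hll; [|unfold L; lra].
      unfold Rdiv in Hll; rewrite Rmult_assoc, Rinv_l in Hll; unfold L in *; lra. }
    pose proof (Rabs_pos (l' - l)).
    apply Hd; try (split; nra);
      [replace (a + l' * (x - a) - (a + l * (x - a))) with ((l' - l) * (x - a)) by ring
      |replace (c + l' * (y - c) - (c + l * (y - c))) with ((l' - l) * (y - c)) by ring];
      rewrite Rabs_mult; [rewrite (Rabs_right (x - a)) | rewrite (Rabs_right (y - c))];
      unfold L in *; nra. }
  unfold phi in Hphi; rewrite !Rmult_1_l, !Rmult_0_l, !Rplus_0_r in Hphi.
  replace (a + (x - a)) with x in Hphi by ring; replace (c + (y - c)) with y in Hphi by ring.
  pose proof (Rabs_triang_inv (h x y) (h a c)); lra.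
Qed.

Lemma unif_cont_1d_RInt_slice (h : R -> R -> R) (t : R) :
  unif_cont_2d h -> c <= t <= d -> unif_cont_1d a b (fun r => RInt (h r) c t).
Proof.
  intros Hh Ht eps Heps.
  destruct (Hh (eps / (d - c + 1))) as [delta [Hdelta Hd]]; [apply Rdiv_lt_0_compat; lra|].
  exists delta; split; auto; intros x u Hx Hu Hux.
  rewrite <- (RInt_minus (V := R_CompleteNormedModule)) by (apply ex_RInt_slice; auto; lra).
  eapply Rle_lt_trans.
  { apply Rabs_RInt_le_const with (M := eps / (d - c + 1)).
    - apply (ex_RInt_minus (V := R_NormedModule)); apply ex_RInt_slice; auto; lra.
    - intros w Hw; rewrite Rmin_left, Rmax_right in Hw by lra; left; apply Hd; try lra.
      rewrite Rminus_diag, Rabs_R0; auto. }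
  rewrite Rabs_right by lra.
  apply Rlt_le_trans with ((d - c + 1) * (eps / (d - c + 1))); [|right; field; lra].
  apply Rmult_lt_compat_r; [apply Rdiv_lt_0_compat|]; lra.
Qed.

Lemma ex_RInt_RInt_slice (h : R -> R -> R) (x1 x2 t : R) :
  unif_cont_2d h -> a <= x1 <= b -> a <= x2 <= b -> c <= t <= d ->
  ex_RInt (fun r => RInt (h r) c t) x1 x2.
Proof. intros; eapply ex_RInt_unif_cont_1d; eauto; apply unif_cont_1d_RInt_slice; auto. Qed.

Lemma Rabs_RInt_slice_le (h : R -> R -> R) (M r y1 y2 : R) :
  unif_cont_2d h -> (forall r w, a <= r <= b -> c <= w <= d -> Rabs (h r w) <= M) ->
  a <= r <= b -> c <= y1 <= d -> c <= y2 <= d ->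
  Rabs (RInt (h r) y1 y2) <= Rabs (y2 - y1) * M.
Proof.
  intros Hh HM Hr Hy1 Hy2; apply Rabs_RInt_le_const; [apply ex_RInt_slice; auto|].
  intros w Hw; apply HM; auto; apply (Rmin_Rmax_interval c d y1 y2); auto.
Qed.

(** * The Picard operator *)

Section Picard.

Variable C : R.

Definition picard (h : R -> R -> R) (s t : R) : R :=
  C * RInt (fun r => RInt (fun w => h r w) c t) a s.

Fixpoint picard_iter (n : nat) (h : R -> R -> R) : R -> R -> R :=
  match n with
  | O => h
  | S n => picard (picard_iter n h)
  end.

Lemma Rabs_picard_sub_le (h : R -> R -> R) (M x y u v : R) :
  unif_cont_2d h -> (forall r w, a <= r <= b -> c <= w <= d -> Rabs (h r w) <= M) ->
  a <= x <= b -> c <= y <= d -> a <= u <= b -> c <= v <= d ->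
  Rabs (picard h u v - picard h x y) <=
  Rabs C * M * ((b - a) * Rabs (v - y) + (d - c) * Rabs (u - x)).
Proof.
  intros Hh HM Hx Hy Hu Hv; unfold picard.
  assert (HM0 : 0 <= M)
    by (specialize (HM a c ltac:(lra) ltac:(lra)); pose proof (Rabs_pos (h a c)); lra).
  set (phi := fun t r => RInt (h r) c t).
  change (Rabs (C * RInt (phi v) a u - C * RInt (phi y) a x) <=
          Rabs C * M * ((b - a) * Rabs (v - y) + (d - c) * Rabs (u - x))).
  assert (Hphi : forall t x1 x2, c <= t <= d -> a <= x1 <= b -> a <= x2 <= b ->
                 ex_RInt (phi t) x1 x2) by (intros; apply ex_RInt_RInt_slice; auto).
  replace (C * RInt (phi v) a u - C * RInt (phi y) a x) with
    (C * (RInt (phi v) a u - RInt (phi v) a x) + C * (RInt (phi v) a x - RInt (phi y) a x))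
    by ring.
  rewrite RInt_Chasles_sub by (apply Hphi; lra).
  rewrite <- (RInt_minus (V := R_CompleteNormedModule)) by (apply Hphi; lra).
  assert (Hside : Rabs (RInt (phi v) x u) <= Rabs (u - x) * ((d - c) * M)).
  { apply Rabs_RInt_le_const; [apply Hphi; lra|].
    intros r Hr; unfold phi; eapply Rle_trans.
    - apply Rabs_RInt_slice_le; auto; try lra; apply (Rmin_Rmax_interval a b x u); auto.
    - rewrite Rabs_right by lra; apply Rmult_le_compat_r; lra. }
  assert (Hdiff :
    Rabs (RInt (fun r => phi v r - phi y r) a x) <= (b - a) * (Rabs (v - y) * M)).
  { eapply Rle_trans.
    - apply Rabs_RInt_le_const with (M := Rabs (v - y) * M);
        [apply (ex_RInt_minus (V := R_NormedModule)); apply Hphi; lra|].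
      intros r Hr; rewrite Rmin_left, Rmax_right in Hr by lra; unfold phi.
      rewrite RInt_Chasles_sub by (apply ex_RInt_slice; auto; lra).
      apply Rabs_RInt_slice_le; auto; lra.
    - rewrite (Rabs_right (x - a)) by lra.
      apply Rmult_le_compat_r; [apply Rmult_le_pos; auto; apply Rabs_pos|lra]. }
  eapply Rle_trans; [apply Rabs_triang|]; rewrite !Rabs_mult.
  apply Rle_trans with
    (Rabs C * (Rabs (u - x) * ((d - c) * M)) + Rabs C * ((b - a) * (Rabs (v - y) * M)));
    [apply Rplus_le_compat; apply Rmult_le_compat_l; auto; apply Rabs_pos|right; ring].
Qed.

Lemma unif_cont_2d_picard (h : R -> R -> R) : unif_cont_2d h -> unif_cont_2d (picard h).
Proof.
  intros Hh; destruct (unif_cont_2d_bounded h Hh) as [M [HM0 HM]].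
  intros eps Heps.
  set (K := (Rabs C + 1) * (M + 1) * (b - a + (d - c) + 1)).
  assert (HK : 0 < K)
    by (unfold K; pose proof (Rabs_pos C); repeat apply Rmult_lt_0_compat; lra).
  exists (eps / K); split; [apply Rdiv_lt_0_compat; auto|].
  intros x y u v Hx Hy Hu Hv Hux Hvy.
  eapply Rle_lt_trans; [apply (Rabs_picard_sub_le h M); eauto|].
  assert (HCM : 0 <= Rabs C * M) by (pose proof (Rabs_pos C); nra).
  assert (HL : Rabs C * M * (b - a + (d - c)) < K).
  { unfold K; pose proof (Rabs_pos C); nra. }
  apply Rle_lt_trans with (Rabs C * M * (b - a + (d - c)) * (eps / K)).
  - replace (Rabs C * M * (b - a + (d - c)) * (eps / K)) with
      (Rabs C * M * ((b - a) * (eps / K) + (d - c) * (eps / K))) by ring.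
    apply Rmult_le_compat_l; auto; apply Rplus_le_compat; apply Rmult_le_compat_l; lra.
  - apply Rlt_le_trans with (K * (eps / K)); [|right; field; lra].
    apply Rmult_lt_compat_r; [apply Rdiv_lt_0_compat|]; auto.
Qed.

Lemma picard_ext (u v : R -> R -> R) (s t : R) :
  (forall r w, a <= r <= b -> c <= w <= d -> u r w = v r w) ->
  a <= s <= b -> c <= t <= d -> picard u s t = picard v s t.
Proof.
  intros Huv Hs Ht; unfold picard; f_equal.
  apply RInt_ext; intros r Hr; rewrite Rmin_left, Rmax_right in Hr by lra.
  apply RInt_ext; intros w Hw; rewrite Rmin_left, Rmax_right in Hw by lra.
  apply Huv; lra.
Qed.

Lemma picard_plus (u v : R -> R -> R) (s t : R) :
  unif_cont_2d u -> unif_cont_2d v -> a <= s <= b -> c <= t <= d ->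
  picard (fun r w => u r w + v r w) s t = picard u s t + picard v s t.
Proof.
  intros Hu Hv Hs Ht; unfold picard; rewrite <- Rmult_plus_distr_l; f_equal.
  rewrite <- (RInt_plus (V := R_CompleteNormedModule)) by (apply ex_RInt_RInt_slice; auto; lra).
  apply RInt_ext; intros r Hr; rewrite Rmin_left, Rmax_right in Hr by lra.
  apply (RInt_plus (V := R_CompleteNormedModule)); apply ex_RInt_slice; auto; lra.
Qed.

Lemma picard_minus (u v : R -> R -> R) (s t : R) :
  unif_cont_2d u -> unif_cont_2d v -> a <= s <= b -> c <= t <= d ->
  picard (fun r w => u r w - v r w) s t = picard u s t - picard v s t.
Proof.
  intros Hu Hv Hs Ht; unfold picard; rewrite <- Rmult_minus_distr_l; f_equal.
  rewrite <- (RInt_minus (V := R_CompleteNormedModule)) by (apply ex_RInt_RInt_slice; auto; lra).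
  apply RInt_ext; intros r Hr; rewrite Rmin_left, Rmax_right in Hr by lra.
  apply (RInt_minus (V := R_CompleteNormedModule)); apply ex_RInt_slice; auto; lra.
Qed.

Lemma picard_sum (f : nat -> R -> R -> R) (N : nat) (s t : R) :
  (forall n, unif_cont_2d (f n)) -> a <= s <= b -> c <= t <= d ->
  picard (fun r w => sum_f_R0 (fun n => f n r w) N) s t =
  sum_f_R0 (fun n => picard (f n) s t) N.
Proof.
  intros Hf Hs Ht; induction N as [|N IHN]; simpl; auto.
  rewrite <- IHN; apply (picard_plus (fun r w => sum_f_R0 (fun n => f n r w) N)); auto.
  apply unif_cont_2d_sum; auto.
Qed.

Lemma unif_cont_2d_picard_iter (n : nat) (h : R -> R -> R) :
  unif_cont_2d h -> unif_cont_2d (picard_iter n h).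
Proof. intros Hh; induction n; simpl; auto; apply unif_cont_2d_picard; auto. Qed.

Lemma picard_iter_ext (n : nat) (u v : R -> R -> R) (s t : R) :
  (forall r w, a <= r <= b -> c <= w <= d -> u r w = v r w) ->
  a <= s <= b -> c <= t <= d -> picard_iter n u s t = picard_iter n v s t.
Proof. intros Huv; revert s t; induction n; simpl; intros; [apply Huv|apply picard_ext]; auto. Qed.

Lemma picard_iter_plus (n : nat) (u v : R -> R -> R) (s t : R) :
  unif_cont_2d u -> unif_cont_2d v -> a <= s <= b -> c <= t <= d ->
  picard_iter n (fun r w => u r w + v r w) s t = picard_iter n u s t + picard_iter n v s t.
Proof.
  intros Hu Hv; revert s t; induction n as [|n IHn]; simpl; auto; intros s t Hs Ht.
  rewrite (picard_ext _ (fun r w => picard_iter n u r w + picard_iter n v r w)) by auto.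
  apply picard_plus; auto; apply unif_cont_2d_picard_iter; auto.
Qed.

Lemma picard_iter_minus (n : nat) (u v : R -> R -> R) (s t : R) :
  unif_cont_2d u -> unif_cont_2d v -> a <= s <= b -> c <= t <= d ->
  picard_iter n (fun r w => u r w - v r w) s t = picard_iter n u s t - picard_iter n v s t.
Proof.
  intros Hu Hv; revert s t; induction n as [|n IHn]; simpl; auto; intros s t Hs Ht.
  rewrite (picard_ext _ (fun r w => picard_iter n u r w - picard_iter n v r w)) by auto.
  apply picard_minus; auto; apply unif_cont_2d_picard_iter; auto.
Qed.

Lemma picard_iter_picard (n : nat) (h : R -> R -> R) :
  picard_iter n (picard h) = picard_iter (S n) h.
Proof. induction n as [|n IHn]; simpl; auto; rewrite IHn; auto. Qed.

Definition picard_weight (x y : R) (m : nat) : R :=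
  Rabs C ^ m * x ^ m * y ^ m / INR (fact m) ^ 2.

Lemma picard_weight_nonneg (x y : R) (m : nat) : 0 <= x -> 0 <= y -> 0 <= picard_weight x y m.
Proof.
  intros Hx Hy; unfold picard_weight; apply Rdiv_le_0_compat; [|apply pow_lt, INR_fact_lt_0].
  repeat apply Rmult_le_pos; apply pow_le; auto; apply Rabs_pos.
Qed.

Lemma ex_series_picard_weight (x y : R) : 0 <= x -> 0 <= y -> ex_series (picard_weight x y).
Proof.
  intros Hx Hy.
  apply (@ex_series_le R_AbsRing R_CompleteNormedModule _
           (fun m => (Rabs C * x * y) ^ m / INR (fact m))); [|apply ex_series_exp_pow].
  intros m; change (norm (picard_weight x y m)) with (Rabs (picard_weight x y m)).
  rewrite Rabs_right by (apply Rle_ge, picard_weight_nonneg; auto).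
  unfold picard_weight; rewrite !Rpow_mult_distr.
  pose proof (INR_fact_lt_0 m).
  assert (Hfact : 1 <= INR (fact m)) by (apply (le_INR 1), lt_O_fact).
  assert (Hnum : 0 <= Rabs C ^ m * x ^ m * y ^ m)
    by (repeat apply Rmult_le_pos; apply pow_le; auto; apply Rabs_pos).
  unfold Rdiv; apply Rmult_le_compat_l; auto.
  apply Rinv_le_contravar; [lra|simpl; nra].
Qed.

Lemma Rabs_picard_le_pow (h : R -> R -> R) (B s t : R) (m : nat) :
  unif_cont_2d h -> a <= s <= b -> c <= t <= d ->
  (forall r w, a <= r <= s -> c <= w <= t -> Rabs (h r w) <= B * (r - a) ^ m * (w - c) ^ m) ->
  Rabs (picard h s t) <= Rabs C * (B * ((s - a) ^ S m / INR (S m)) * ((t - c) ^ S m / INR (S m))).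
Proof.
  intros Hh Hs Ht HB; unfold picard; rewrite Rabs_mult.
  apply Rmult_le_compat_l; [apply Rabs_pos|].
  replace (B * ((s - a) ^ S m / INR (S m)) * ((t - c) ^ S m / INR (S m)))
    with (B * ((t - c) ^ S m / INR (S m)) * ((s - a) ^ S m / INR (S m))) by ring.
  apply Rabs_RInt_le_is_RInt with (g := fun r => B * ((t - c) ^ S m / INR (S m)) * (r - a) ^ m);
    [lra|apply ex_RInt_RInt_slice; auto; lra
    |apply (@is_RInt_scal R_NormedModule), is_RInt_pow_shift|].
  intros r Hr.
  replace (B * ((t - c) ^ S m / INR (S m)) * (r - a) ^ m)
    with (B * (r - a) ^ m * ((t - c) ^ S m / INR (S m))) by ring.
  apply Rabs_RInt_le_is_RInt with (g := fun w => B * (r - a) ^ m * (w - c) ^ m);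
    [lra|apply ex_RInt_slice; auto; lra
    |apply (@is_RInt_scal R_NormedModule), is_RInt_pow_shift|].
  intros w Hw; apply HB; auto.
Qed.

Lemma Rabs_picard_iter_le (u : R -> R -> R) (B : R) (m : nat) (s t : R) :
  unif_cont_2d u -> (forall r w, a <= r <= b -> c <= w <= d -> Rabs (u r w) <= B) ->
  a <= s <= b -> c <= t <= d ->
  Rabs (picard_iter m u s t) <= B * picard_weight (s - a) (t - c) m.
Proof.
  intros Hu HB; revert s t; induction m as [|m IHm]; intros s t Hs Ht; simpl.
  - apply Rle_trans with B; [apply HB; auto|unfold picard_weight; simpl; right; field].
  - eapply Rle_trans.
    + apply (Rabs_picard_le_pow _ (B * Rabs C ^ m / INR (fact m) ^ 2) s t m);
        auto; [apply unif_cont_2d_picard_iter; auto|].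
      intros r w Hr Hw; eapply Rle_trans; [apply IHm; lra|].
      unfold picard_weight; right; field; apply INR_fact_neq_0.
    + unfold picard_weight; right; rewrite fact_simpl, mult_INR, <- !tech_pow_Rmult.
      field; split; [apply INR_fact_neq_0|apply not_0_INR; lia].
Qed.

(* k = g + T g + ... + T^M g + T^(M+1) k, and the remainder is at most sup |k| times a weight. *)
Lemma picard_neumann_series (k g : R -> R -> R) (s t : R) :
  unif_cont_2d k -> unif_cont_2d g ->
  (forall r w, a <= r <= b -> c <= w <= d -> k r w = g r w + picard k r w) ->
  a <= s <= b -> c <= t <= d ->
  is_series (fun j => picard_iter j g s t) (k s t).
Proof.
  intros Hk Hg Hkg Hs Ht.
  assert (Hstep : forall j, picard_iter j k s t = picard_iter j g s t + picard_iter (S j) k s t).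
  { intros j; rewrite (picard_iter_ext j k (fun r w => g r w + picard k r w)) by auto.
    rewrite picard_iter_plus, picard_iter_picard; auto; apply unif_cont_2d_picard; auto. }
  assert (Hexpand : forall M,
    k s t = sum_f_R0 (fun j => picard_iter j g s t) M + picard_iter (S M) k s t).
  { induction M as [|M IHM]; [apply (Hstep O)|]; simpl sum_f_R0.
    rewrite IHM, (Hstep (S M)); cbn [picard_iter]; ring. }
  destruct (unif_cont_2d_bounded k Hk) as [Mk [HMk0 HMk]].
  assert (Hw := ex_series_lim_0 _ (ex_series_picard_weight (s - a) (t - c) ltac:(lra) ltac:(lra))).
  apply is_lim_seq_Reals in Hw.
  apply is_series_Reals; intros eps Heps.
  destruct (Hw (eps / (Mk + 1))) as [N HN]; [apply Rdiv_lt_0_compat; lra|].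
  exists N; intros M HM; unfold R_dist.
  rewrite (Hexpand M), Rabs_minus_sym.
  replace (sum_f_R0 (fun j => picard_iter j g s t) M + picard_iter (S M) k s t -
           sum_f_R0 (fun j => picard_iter j g s t) M) with (picard_iter (S M) k s t) by ring.
  eapply Rle_lt_trans; [apply (Rabs_picard_iter_le k Mk); auto|].
  specialize (HN (S M) ltac:(lia)); unfold R_dist in HN.
  rewrite Rminus_0_r, Rabs_right in HN by (apply Rle_ge, picard_weight_nonneg; lra).
  apply Rle_lt_trans with (Mk * (eps / (Mk + 1))); [apply Rmult_le_compat_l; lra|].
  apply Rlt_le_trans with ((Mk + 1) * (eps / (Mk + 1))); [|right; field; lra].
  apply Rmult_lt_compat_r; [apply Rdiv_lt_0_compat|]; lra.
Qed.

Lemma picard_monomial (A : R) (i j : nat) (s t : R) :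
  picard (fun r w => A * (r - a) ^ i * (w - c) ^ j) s t =
  C * (A * ((s - a) ^ S i / INR (S i)) * ((t - c) ^ S j / INR (S j))).
Proof.
  unfold picard.
  rewrite (RInt_ext _ (fun r => A * ((t - c) ^ S j / INR (S j)) * (r - a) ^ i)).
  - rewrite RInt_scal_pow_shift; ring.
  - intros r _; rewrite RInt_scal_pow_shift; simpl; ring.
Qed.

Lemma picard_iter_sum_steps (f : nat -> nat -> R -> R -> R) (N m : nat) (s t : R) :
  (forall n m, unif_cont_2d (f n m)) ->
  (forall n m s t, a <= s <= b -> c <= t <= d -> picard (f n m) s t = f n (S m) s t) ->
  a <= s <= b -> c <= t <= d ->
  picard_iter m (fun r w => sum_f_R0 (fun n => f n 0%nat r w) N) s t =
  sum_f_R0 (fun n => f n m s t) N.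
Proof.
  intros Hf Hstep; revert s t; induction m as [|m IHm]; simpl; auto; intros s t Hs Ht.
  rewrite (picard_ext _ (fun r w => sum_f_R0 (fun n => f n m r w) N)) by auto.
  rewrite picard_sum by auto; apply sum_eq; intros; apply Hstep; auto.
Qed.

Lemma picard_iter_series_interchange (f : nat -> nat -> R -> R -> R) (g : R -> R -> R)
  (s t : R) :
  (forall n m, unif_cont_2d (f n m)) ->
  (forall n m s t, a <= s <= b -> c <= t <= d -> picard (f n m) s t = f n (S m) s t) ->
  unif_cont_2d g ->
  (forall eps, 0 < eps -> exists N0, forall N, (N0 <= N)%nat -> forall r w,
     a <= r <= b -> c <= w <= d -> Rabs (g r w - sum_f_R0 (fun n => f n 0%nat r w) N) <= eps) ->
  (forall n, ex_series (fun m => f n m s t)) ->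
  a <= s <= b -> c <= t <= d ->
  ex_series (fun m => picard_iter m g s t) /\
  is_series (fun n => Series (fun m => f n m s t)) (Series (fun m => picard_iter m g s t)).
Proof.
  intros Hf Hstep Hg Happrox Hex Hs Ht.
  apply (is_series_Series_interchange (fun n m => f n m s t) _ (picard_weight (s - a) (t - c)));
    auto.
  { apply ex_series_picard_weight; lra. }
  intros eps Heps; destruct (Happrox eps Heps) as [N0 HN0]; exists N0; intros N m HN.
  set (P := fun r w => sum_f_R0 (fun n => f n 0%nat r w) N).
  assert (HP : unif_cont_2d P) by (apply unif_cont_2d_sum; auto).
  rewrite <- (picard_iter_sum_steps f N m s t Hf Hstep Hs Ht); fold P.
  rewrite <- picard_iter_minus by auto.
  apply Rabs_picard_iter_le; auto; [apply unif_cont_2d_minus; auto|].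
  intros; apply HN0; auto.
Qed.

(** * Picard iterates of the boundary data *)

Lemma unif_cont_2d_gterm_fst (p : nat -> R) (n m : nat) :
  unif_cont_2d (fun r w => gterm p C (r - a) (w - c) n m).
Proof.
  apply unif_cont_2d_of_continuity_2d; intros x y _ _.
  eapply continuity_2d_pt_ext;
    [|apply (continuity_2d_pt_monomial (gcoef p C n m) a c (n + m) m)].
  intros r w; rewrite gterm_monomial; auto.
Qed.

Lemma unif_cont_2d_gterm_snd (q : nat -> R) (n m : nat) :
  unif_cont_2d (fun r w => gterm q C (w - c) (r - a) n m).
Proof.
  apply unif_cont_2d_of_continuity_2d; intros x y _ _.
  eapply continuity_2d_pt_ext;
    [|apply (continuity_2d_pt_monomial (gcoef q C n m) a c m (n + m))].
  intros r w; rewrite gterm_monomial; ring.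
Qed.

Lemma picard_gterm_fst (p : nat -> R) (n m : nat) (s t : R) :
  picard (fun r w => gterm p C (r - a) (w - c) n m) s t = gterm p C (s - a) (t - c) n (S m).
Proof.
  rewrite <- gterm_succ, <- (picard_monomial (gcoef p C n m) (n + m) m).
  unfold picard; f_equal; apply RInt_ext; intros r _; apply RInt_ext; intros w _.
  apply gterm_monomial.
Qed.

Lemma picard_gterm_snd (q : nat -> R) (n m : nat) (s t : R) :
  picard (fun r w => gterm q C (w - c) (r - a) n m) s t = gterm q C (t - c) (s - a) n (S m).
Proof.
  rewrite <- gterm_succ.
  set (X := (s - a) ^ S m / INR (S m)); set (Y := (t - c) ^ S (n + m) / INR (S (n + m))).
  replace (C * (gcoef q C n m * Y * X)) with (C * (gcoef q C n m * X * Y)) by ring.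
  unfold X, Y; rewrite <- (picard_monomial (gcoef q C n m) m (n + m)).
  unfold picard; f_equal; apply RInt_ext; intros r _; apply RInt_ext; intros w _.
  rewrite gterm_monomial; simpl; ring.
Qed.

Lemma pser_fst_unif_approx (p : nat -> R) (sigma : R -> R) :
  unif_cv_on (pser_partial p a) sigma a b ->
  forall eps, 0 < eps -> exists N0, forall N, (N0 <= N)%nat -> forall r w,
    a <= r <= b -> c <= w <= d ->
    Rabs (sigma r - p 0%nat - sum_f_R0 (fun n => gterm p C (r - a) (w - c) (S n) 0) N) <= eps.
Proof.
  intros Hcv eps Heps; destruct (Hcv eps Heps) as [N0 HN0]; exists N0; intros N HN r w Hr _.
  rewrite sum_gterm_m0_succ; change (sum_f_R0 _ (S N)) with (pser_partial p a (S N) r).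
  replace (sigma r - p 0%nat - (pser_partial p a (S N) r - p 0%nat))
    with (- (pser_partial p a (S N) r - sigma r)) by ring.
  rewrite Rabs_Ropp; left; apply HN0; auto.
Qed.

Lemma pser_snd_unif_approx (q : nat -> R) (tau : R -> R) :
  unif_cv_on (pser_partial q c) tau c d ->
  forall eps, 0 < eps -> exists N0, forall N, (N0 <= N)%nat -> forall r w,
    a <= r <= b -> c <= w <= d ->
    Rabs (tau w - sum_f_R0 (fun n => gterm q C (w - c) (r - a) n 0) N) <= eps.
Proof.
  intros Hcv eps Heps; destruct (Hcv eps Heps) as [N0 HN0]; exists N0; intros N HN r w _ Hw.
  rewrite sum_gterm_m0; change (sum_f_R0 _ N) with (pser_partial q c N w).
  rewrite Rabs_minus_sym; left; apply HN0; auto.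
Qed.

Lemma picard_iter_pser_fst (p : nat -> R) (sigma : R -> R) (s t : R) :
  unif_cv_on (pser_partial p a) sigma a b -> a <= s <= b -> c <= t <= d ->
  ex_series (fun m => picard_iter m (fun r _ => sigma r - p 0%nat) s t) /\
  is_series (fun n => Series (gterm p C (s - a) (t - c) (S n)))
    (Series (fun m => picard_iter m (fun r _ => sigma r - p 0%nat) s t)).
Proof.
  intros Hcv Hs Ht.
  apply (picard_iter_series_interchange (fun n m r w => gterm p C (r - a) (w - c) (S n) m)); auto.
  - intros; apply unif_cont_2d_gterm_fst.
  - intros; apply picard_gterm_fst.
  - apply unif_cont_2d_pser_fst; auto.
  - apply pser_fst_unif_approx; auto.
  - intros; apply ex_series_gterm; lra.
Qed.

Lemma picard_iter_pser_snd (q : nat -> R) (tau : R -> R) (s t : R) :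
  unif_cv_on (pser_partial q c) tau c d -> a <= s <= b -> c <= t <= d ->
  ex_series (fun m => picard_iter m (fun _ w => tau w) s t) /\
  is_series (fun n => Series (gterm q C (t - c) (s - a) n))
    (Series (fun m => picard_iter m (fun _ w => tau w) s t)).
Proof.
  intros Hcv Hs Ht.
  apply (picard_iter_series_interchange (fun n m r w => gterm q C (w - c) (r - a) n m)); auto.
  - intros; apply unif_cont_2d_gterm_snd.
  - intros; apply picard_gterm_snd.
  - apply (unif_cont_2d_pser_snd q); auto.
  - apply pser_snd_unif_approx; auto.
  - intros; apply ex_series_gterm; lra.
Qed.

End Picard.

End Rectangle.

Theorem mainTheorem6 (a b c d C : R) (p q : nat -> R) (sigma tau : R -> R)
  (k : R -> R -> R) :
  a < b -> c < d -> C <> 0 -> p 0%nat = q 0%nat ->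
  unif_cv_on (pser_partial p a) sigma a b ->
  unif_cv_on (pser_partial q c) tau c d ->
  (* k is the solution of the Goursat problem: continuous on the rectangle and
     satisfying the integral equation *)
  cont_on_rect k a b c d ->
  (forall s t, a <= s <= b -> c <= t <= d ->
     k s t = sigma s + tau t - sigma a
             + C * RInt (fun r => RInt (fun w => k r w) c t) a s) ->
  forall s t, a <= s <= b -> c <= t <= d ->
    (forall n, ex_series (gterm p C (s - a) (t - c) n)) /\
    (forall n, ex_series (gterm q C (t - c) (s - a) n)) /\
    (exists SP SQ : R,
       is_series (fun n => Series (gterm p C (s - a) (t - c) (S n))) SP /\
       is_series (fun n => Series (gterm q C (t - c) (s - a) n)) SQ /\
       k s t = SP + SQ) /\
    (exists SP SQ : R,
       is_series (fun n => Series (gterm p C (s - a) (t - c) n)) SP /\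
       is_series (fun n => Series (gterm q C (t - c) (s - a) (S n))) SQ /\
       k s t = SP + SQ).
Proof.
  intros Hab Hcd _ Hpq Hsig Htau Hk Hkeq s t Hs Ht.
  assert (Hab' : a <= b) by lra; assert (Hcd' : c <= d) by lra.
  set (gs := fun r (_ : R) => sigma r - p 0%nat); set (gt := fun (_ : R) w => tau w).
  assert (Ugs : unif_cont_2d a b c d gs) by (apply unif_cont_2d_pser_fst; auto).
  assert (Ugt : unif_cont_2d a b c d gt) by (apply (unif_cont_2d_pser_snd a b c d q); auto).
  assert (Hneumann :
    is_series (fun j => picard_iter a c C j (fun r w => gs r w + gt r w) s t) (k s t)).
  { apply (picard_neumann_series a b c d); auto.
    - apply unif_cont_2d_of_cont_on_rect; auto.
    - apply unif_cont_2d_plus; auto.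
    - intros r w Hr Hw; rewrite Hkeq, (unif_cv_on_pser_center p sigma a b) by auto.
      unfold gs, gt, picard; ring. }
  destruct (picard_iter_pser_fst a b c d Hab' Hcd' C p sigma s t) as [HGs HSs]; auto.
  destruct (picard_iter_pser_snd a b c d Hab' Hcd' C q tau s t) as [HGt HSt]; auto.
  set (Gs := fun m => picard_iter a c C m gs s t) in *.
  set (Gt := fun m => picard_iter a c C m gt s t) in *.
  assert (Hsplit : k s t = Series Gs + Series Gt).
  { rewrite <- Series_plus by auto; symmetry; apply is_series_unique.
    eapply is_series_ext; [|exact Hneumann]; intros j; apply (picard_iter_plus a b c d); auto. }
  split; [intros; apply ex_series_gterm; lra|].
  split; [intros; apply ex_series_gterm; lra|].
  split; [exists (Series Gs), (Series Gt); auto|].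
  rewrite Hsplit; apply (is_series_move_head (fun n => Series (gterm p C (s - a) (t - c) n))
                                             (fun n => Series (gterm q C (t - c) (s - a) n))); auto.
  apply Series_ext; intros; apply gterm_n0_swap; auto.
Qed.
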